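(* Let $W$ be a complex vector space. Every $\mathcal{S}_{trig}$-local subset of $\mathcal{E}(W)$ is compatible, and every quasi $\mathcal{S}_{trig}$-local subset of $\mathcal{E}(W)$ is quasi compatible.
   Context: $\mathcal{E}(W)=\mathrm{Hom}(W,W((x)))$; $\mathbb{C}(x)$ the rational function field; $\iota_{x_2,x_1}$ expansion in $\mathbb{C}((x_2))((x_1))$. $U\subset\mathcal{E}(W)$ is $\mathcal{S}_{trig}$-local if for any $a(x),b(x)\in U$ there exist $u_i(x),v_i(x)\in U$, $q_i(x)\in\mathbb{C}(x)$ ($i=1,\dots,r$), $k\in\mathbb{N}$ with $(x_1-x_2)^ka(x_1)b(x_2)=(x_1-x_2)^k\sum_i\iota_{x_2,x_1}(q_i(x_1/x_2))u_i(x_2)v_i(x_1)$; quasi $\mathcal{S}_{trig}$-local if instead $p(x_1/x_2)a(x_1)b(x_2)=p(x_1/x_2)\sum_i\iota_{x_2,x_1}(q_i(x_1/x_2))u_i(x_2)v_i(x_1)$ for some nonzero polynomial $p$. A finite sequence $a_1,\dots,a_r$ in $\mathcal{E}(W)$ is compatible if $\prod_{i<j}(x_i-x_j)^ka_1(x_1)\cdots a_r(x_r)\in\mathrm{Hom}(W,W((x_1,\dots,x_r)))$ for some $k\in\mathbb{N}$, quasi compatible if $\prod_{i<j}p(x_i,x_j)a_1(x_1)\cdots a_r(x_r)\in\mathrm{Hom}(W,W((x_1,\dots,x_r)))$ for some nonzero $p\in\mathbb{C}[[x,y]]$; a subset is (quasi) compatible if all its finite sequences are. *)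

From HB Require Import structures.
From mathcomp Require Import all_boot all_order all_algebra.
From mathcomp Require Import complex.
From mathcomp Require Import Rstruct.

Set Implicit Arguments.
Unset Strict Implicit.
Unset Printing Implicit Defensive.

Import Order.TTheory GRing.Theory Num.Theory.
Local Open Scope ring_scope.

Definition Cc : fieldType := (Rdefinitions.R)[i].

Section VertexOperatorLocality.
Variable K : fieldType.
Variable W : lmodType K.

(* E(W) = Hom(W, W((x))) : a(x) = sum_n a_n x^n, with a_n : W -> W   *)
(* linear and, for each w, a_n w = 0 for n << 0.  [ecoef a n] is the *)
(* coefficient of x^n.                                               *)
Record EW := MkEW {
  ecoef :> int -> {linear W -> W};
  etrunc : forall w : W, exists N : int, forall n : int, n < N -> ecoef n w = 0
}.

(* [fsum_is F v] : the family F has finite support and its sum is v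
   (used to express products of formal series that are well defined
   because only finitely many terms contribute to each coefficient). *)
Definition fsum_is (I : eqType) (F : I -> W) (v : W) : Prop :=
  exists s : seq I, [/\ uniq s, (forall i, i \notin s -> F i = 0)
                      & \sum_(i <- s) F i = v].

(* Multivariable series with coefficients in W, indexed by exponent  *)
(* vectors n : 'I_r -> int (n i = exponent of x_(i+1)).               *)

(* coefficient of x_1^(n 0) ... x_r^(n (r-1)) in a_1(x_1)...a_r(x_r) w *)
Definition prodcoef r (a : 'I_r -> EW) (w : W) (n : 'I_r -> int) : W :=
  foldr (fun i acc => a i (n i) acc) w (enum 'I_r).

(* power series in two variables: p s t = coefficient of x^s y^t *)
Definition ps2 := nat -> nat -> K.

Definition ps2_nonzero (p : ps2) := exists s t, p s t != 0.

(* (x - y)^k as a power series *)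
Definition psXY (k : nat) : ps2 :=
  fun s t => if (s + t == k)%N then (-1) ^+ t * ('C(k, s))%:R else 0.

Definition shift2 r (n : 'I_r -> int) (i j : 'I_r) (s t : nat) : 'I_r -> int :=
  fun l => n l - (if l == i then s%:Z else 0) - (if l == j then t%:Z else 0).

(* d = p(x_i, x_j) c *)
Definition mul_pair r (p : ps2) (i j : 'I_r) (c d : ('I_r -> int) -> W) : Prop :=
  forall n, fsum_is (fun st : nat * nat => p st.1 st.2 *: c (shift2 n i j st.1 st.2))
                    (d n).

(* d = (prod_{(i,j) in l} p(x_i, x_j)) c *)
Fixpoint mul_pairs r (p : ps2) (l : seq ('I_r * 'I_r)) (c d : ('I_r -> int) -> W)
  : Prop :=
  match l with
  | [::] => forall n, d n = c n
  | ij :: l' => exists e, mul_pair p ij.1 ij.2 c e /\ mul_pairs p l' e d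
  end.

Definition pairs_lt r : seq ('I_r * 'I_r) :=
  [seq ij <- [seq (i, j) | i <- enum 'I_r, j <- enum 'I_r] | (nat_of_ord ij.1 < nat_of_ord ij.2)%N].

(* d lies in W((x_1,...,x_r)) = W[[x_1..x_r]][x_1^-1..x_r^-1] *)
Definition multi_laurent r (d : ('I_r -> int) -> W) : Prop :=
  exists N : int, forall n, (exists l, n l < N) -> d n = 0.

Definition compatible_seq r (a : 'I_r -> EW) : Prop :=
  exists k : nat, forall w : W, exists d,
    mul_pairs (psXY k) (pairs_lt r) (prodcoef a w) d /\ multi_laurent d.

Definition quasi_compatible_seq r (a : 'I_r -> EW) : Prop :=
  exists p : ps2, ps2_nonzero p /\ forall w : W, exists d,
    mul_pairs p (pairs_lt r) (prodcoef a w) d /\ multi_laurent d.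

Definition compatible (U : EW -> Prop) : Prop :=
  forall r (a : 'I_r -> EW), (forall i, U (a i)) -> compatible_seq a.

Definition quasi_compatible (U : EW -> Prop) : Prop :=
  forall r (a : 'I_r -> EW), (forall i, U (a i)) -> quasi_compatible_seq a.

(* Two-variable series: F m n = coefficient of x_1^m x_2^n.          *)

(* [laurent_exp q e] : e is the Laurent expansion at 0 of the rational
   function q(z), i.e. q(z) = sum_j e j z^j in K((z)). *)
Definition laurent_exp (q : {fraction {poly K}}) (e : int -> K) : Prop :=
  (exists J : int, forall j : int, j < J -> e j = 0) /\
  exists f g : {poly K}, [/\ g != 0, q = FracField.tofrac f / FracField.tofrac g &
    forall n : int, \sum_(i < size g) g`_i * e (n - i%:Z)
                    = (if n is Posz m then f`_m else 0)].

(* coefficients of a(x_1) b(x_2) w *)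
Definition ab12 (a b : EW) (w : W) : int -> int -> W :=
  fun m n => a m (b n w).

(* coefficients of u(x_2) v(x_1) w *)
Definition uv21 (u v : EW) (w : W) : int -> int -> W :=
  fun m n => u n (v m w).

(* G = iota_{x_2,x_1}(q(x_1/x_2)) F, where q(z) = sum_j e j z^j *)
Definition iota_mul (e : int -> K) (F G : int -> int -> W) : Prop :=
  forall m n, fsum_is (fun j : int => e j *: F (m - j) (n + j)) (G m n).

(* (x_1 - x_2)^k F *)
Definition mulX12 (k : nat) (F : int -> int -> W) : int -> int -> W :=
  fun m n => \sum_(s < k.+1)
     ((-1) ^+ (k - s) * ('C(k, s))%:R) *: F (m - s%:Z) (n - (k - s)%:Z).

(* p(x_1/x_2) F, p a polynomial *)
Definition mulP12 (p : {poly K}) (F : int -> int -> W) : int -> int -> W :=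
  fun m n => \sum_(s < size p) p`_s *: F (m - s%:Z) (n + s%:Z).

(* the right-hand side  sum_i iota_{x_2,x_1}(q_i(x_1/x_2)) u_i(x_2) v_i(x_1) w *)
Definition loc_rhs r (u v : 'I_r -> EW) (q : 'I_r -> {fraction {poly K}})
  (w : W) (G : int -> int -> W) : Prop :=
  exists H : 'I_r -> int -> int -> W,
    (forall i, exists e, laurent_exp (q i) e /\ iota_mul e (uv21 (u i) (v i) w) (H i))
    /\ forall m n, G m n = \sum_(i < r) H i m n.

Definition Strig_local (U : EW -> Prop) : Prop :=
  forall a b, U a -> U b ->
  exists r (u v : 'I_r -> EW) (q : 'I_r -> {fraction {poly K}}) (k : nat),
    (forall i, U (u i) /\ U (v i)) /\
    forall w : W, exists G, loc_rhs u v q w G /\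
      forall m n, mulX12 k (ab12 a b w) m n = mulX12 k G m n.

Definition quasi_Strig_local (U : EW -> Prop) : Prop :=
  forall a b, U a -> U b ->
  exists r (u v : 'I_r -> EW) (q : 'I_r -> {fraction {poly K}}) (p : {poly K}),
    [/\ p != 0, (forall i, U (u i) /\ U (v i)) &
    forall w : W, exists G, loc_rhs u v q w G /\
      forall m n, mulP12 p (ab12 a b w) m n = mulP12 p G m n].

End VertexOperatorLocality.

From HB Require Import structures.
From mathcomp Require Import all_boot all_order all_algebra.
From mathcomp Require Import complex.
From mathcomp Require Import zify ring.
From Stdlib Require Import FunctionalExtensionality IndefiniteDescription.
Import Order.TTheory GRing.Theory Num.Theory.
Set Implicit Arguments.
Unset Strict Implicit.
Unset Printing Implicit Defensive.
Open Scope ring_scope.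

(* By induction on [r] we find one polynomial [P0] such that multiplying
   [a_0(x_0) ... a_(r-1)(x_(r-1)) w] by [P0(x_i, x_j) Q(x_i, x_j)] for all [i < j],
   with [Q] an arbitrary further polynomial, leaves only exponents bounded below
   in every variable.  For [x_1, ..., x_(r-1)] this is the induction hypothesis
   for [a_1, ..., a_(r-1)].  For [x_0], the locality of [(a_0, a_1)] turns
   [P(x_0, x_1) a_0(x_0) a_1(x_1)] into a finite sum of expansions in [x_0 / x_1]
   of [u_i(x_1) v_i(x_0)]; the induction hypothesis for [v_i, a_2, ..., a_(r-1)]
   bounds the exponent of [x_0], and each expansion, being a Laurent series in
   [x_0 / x_1], lowers that bound by a fixed amount.  [P0] is a product of
   locality polynomials, so it is a power of [x_0 - x_1] in the local case and a
   nonzero polynomial in the quasi local case. *)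

Lemma int_lbound (I : finType) (N : I -> int) : exists N0, forall i, N0 <= N i.
Proof.
suff [N0 HN0] : exists N0, forall x, x \in map N (enum I) -> N0 <= x.
  by exists N0 => i; apply/HN0/map_f; rewrite mem_enum.
elim: (map N (enum I)) => [|x s [N0 HN0]]; first by exists 0.
exists (Num.min x N0) => y; rewrite inE => /orP[/eqP ->|Hy].
  by rewrite ge_min lexx.
by rewrite ge_min (HN0 _ Hy) orbT.
Qed.

Lemma uniform_lbound (I : finType) (P : I -> int -> Prop) :
  (forall i N N', N' <= N -> P i N -> P i N') ->
  (forall i, exists N, P i N) -> exists N, forall i, P i N.
Proof.
move=> HP /functional_choice[f Hf]; have [N0 HN0] := int_lbound f.
by exists N0 => i; apply: HP (HN0 i) (Hf i).
Qed.

Lemma size_polyM_leq (K : fieldType) (P Q : {poly K}) d1 d2 :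
  (size P <= d1.+1)%N -> (size Q <= d2.+1)%N -> (size (P * Q)%R <= (d1 + d2).+1)%N.
Proof. by move=> HP HQ; have := size_polyMleq P Q; lia. Qed.

Section FiniteSums.
Variables (K : fieldType) (V : lmodType K) (I : eqType).
Implicit Types (F G : I -> V) (v u : V).

Lemma fsum_undup F (s : seq I) :
  (forall i, i \notin s -> F i = 0) -> fsum_is F (\sum_(i <- undup s) F i).
Proof.
move=> H; exists (undup s); split => //; first exact: undup_uniq.
by move=> i; rewrite mem_undup; exact: H.
Qed.

Lemma fsum_is_sum F v (s : seq I) :
  fsum_is F v -> (forall i, i \notin s -> F i = 0) -> v = \sum_(i <- undup s) F i.
Proof.
case=> s0 [u0 H0 <-] Hs.
rewrite (bigID (mem s)) /= [X in _ + X]big1 => [|i /Hs //].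
rewrite addr0 [RHS](bigID (mem s0)) /= [X in _ + X]big1 => [|i /H0 //].
rewrite addr0 -[LHS]big_filter -[RHS]big_filter; apply/perm_big/uniq_perm.
- exact: filter_uniq.
- by rewrite filter_uniq ?undup_uniq.
by move=> i; rewrite !mem_filter mem_undup andbC.
Qed.

Lemma fsum_is0 F v : fsum_is F v -> (forall i, F i = 0) -> v = 0.
Proof. by case=> s [_ _ <-] H; rewrite big1. Qed.

Lemma eq_fsum_is F G v : (forall i, F i = G i) -> fsum_is F v -> fsum_is G v.
Proof. by move=> /functional_extensionality ->. Qed.

Lemma fsum_isD F G v u :
  fsum_is F v -> fsum_is G u -> fsum_is (fun i => F i + G i) (v + u).
Proof.
move=> HF HG; have [s1 [_ H1 _]] := HF; have [s2 [_ H2 _]] := HG.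
have HF' i : i \notin s1 ++ s2 -> F i = 0.
  by rewrite mem_cat negb_or => /andP[/H1].
have HG' i : i \notin s1 ++ s2 -> G i = 0.
  by rewrite mem_cat negb_or => /andP[_ /H2].
rewrite (fsum_is_sum HF HF') (fsum_is_sum HG HG') -big_split /=.
by apply: fsum_undup => i Hi; rewrite HF' ?HG' ?addr0.
Qed.

Lemma fsum_is_sumr (J : Type) (r : seq J) (F : J -> I -> V) (v : J -> V) :
  (forall k, fsum_is (F k) (v k)) ->
  fsum_is (fun i => \sum_(k <- r) F k i) (\sum_(k <- r) v k).
Proof.
move=> H; elim: r => [|k r IH].
  by rewrite big_nil; exists [::]; split; rewrite ?big_nil // => i _; rewrite big_nil.
by rewrite big_cons; apply: eq_fsum_is (fsum_isD (H k) IH) => i; rewrite big_cons.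
Qed.

Lemma fsum_isZ F v c : fsum_is F v -> fsum_is (fun i => c *: F i) (c *: v).
Proof.
case=> s [u H <-]; exists s; split => //; last by rewrite scaler_sumr.
by move=> i /H ->; rewrite scaler0.
Qed.

End FiniteSums.

(* [hmul sh d P F] multiplies the family [F] by the degree-[d] homogenization
   of [P] in two variables; [sh s t] lowers their exponents by [s] and [t]. *)
Definition hmul (K : fieldType) (V : lmodType K) (X : Type)
  (sh : nat -> nat -> X -> X) (d : nat) (P : {poly K}) (F : X -> V) : X -> V :=
  fun x => \sum_(s < d.+1) P`_s *: F (sh s (d - s)%N x).

Section HomogeneousMultiplication.
Variables (K : fieldType) (V : lmodType K) (X : Type) (sh : nat -> nat -> X -> X).
Hypothesis shA : forall s t s' t' x, sh s t (sh s' t' x) = sh (s + s') (t + t') x.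
Implicit Types (P Q : {poly K}) (F : X -> V).

Lemma hmulZl n (c : 'I_n -> K) (Q : 'I_n -> {poly K}) d F x :
  hmul sh d (\sum_(i < n) c i *: Q i) F x = \sum_(i < n) c i *: hmul sh d (Q i) F x.
Proof.
rewrite /hmul; under eq_bigr => s _ do rewrite coef_sum scaler_suml.
rewrite exchange_big /=; apply: eq_bigr => i _; rewrite scaler_sumr.
by apply: eq_bigr => s _; rewrite coefZ scalerA.
Qed.

Lemma hmulXn d e i P F x : (i <= e)%N -> (size P <= d.+1)%N ->
  hmul sh (d + e) (P * 'X^i) F x = hmul sh d P F (sh i (e - i) x).
Proof.
move=> Hi HP; rewrite /hmul.
rewrite -(big_mkord xpredT (fun s => (P * 'X^i)`_s *: F (sh s (d + e - s) x))).
rewrite (big_cat_nat (n := i)) //=; last by lia.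
rewrite big1_seq ?add0r; last first.
  move=> s /andP[_]; rewrite mem_index_iota => /andP[_ Hs].
  by rewrite coefMXn Hs scale0r.
rewrite -{1}(add0n i) big_addn (big_cat_nat (n := d.+1)) //=; last by lia.
rewrite [X in _ + X]big1_seq ?addr0; last first.
  move=> s /andP[_]; rewrite mem_index_iota => /andP[Hs _]; rewrite coefMXn.
  rewrite ifF; last by apply/negbTE; rewrite -leqNgt; lia.
  by rewrite addnK (leq_sizeP _ _ HP) ?scale0r.
rewrite big_mkord; apply: eq_bigr => s _.
have := ltn_ord s; move: (nat_of_ord s) => s' Hs'.
rewrite coefMXn ifF; last by apply/negbTE; rewrite -leqNgt leq_addl.
rewrite addnK shA; congr (_ *: F (sh _ _ x)); lia.
Qed.

Lemma hmulM d1 d2 P Q F x : (size P <= d1.+1)%N -> (size Q <= d2.+1)%N ->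
  hmul sh (d1 + d2) (P * Q) F x = hmul sh d2 Q (hmul sh d1 P F) x.
Proof.
move=> HP HQ.
have EQ : Q = \sum_(i < d2.+1) Q`_i *: 'X^i.
  rewrite -poly_def; apply/polyP => j; rewrite coef_poly.
  by case: ltnP => // Hj; rewrite (leq_sizeP _ _ HQ).
rewrite {1}EQ mulr_sumr; under eq_bigr => i _ do rewrite -scalerAr.
rewrite hmulZl /hmul; apply: eq_bigr => i _; congr (_ *: _).
by rewrite -/(hmul sh (d1 + d2) _ F x) hmulXn // -ltnS.
Qed.

Lemma hmul_sumr (J : Type) (r : seq J) (G : J -> X -> V) d P x :
  hmul sh d P (fun y => \sum_(k <- r) G k y) x = \sum_(k <- r) hmul sh d P (G k) x.
Proof.
by rewrite /hmul; under eq_bigr => s _ do rewrite scaler_sumr; rewrite exchange_big.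
Qed.

Lemma hmulBr (G1 G2 : X -> V) d P x :
  hmul sh d P (fun y => G1 y - G2 y) x = hmul sh d P G1 x - hmul sh d P G2 x.
Proof. by rewrite /hmul -sumrB; apply: eq_bigr => s _; rewrite scalerBr. Qed.

End HomogeneousMultiplication.

Section MultiSeries.
Variables (K : fieldType) (W : lmodType K).

Definition mseries r := ('I_r -> int) -> W.

Definition pmul r (i j : 'I_r) d (P : {poly K}) (F : mseries r) : mseries r :=
  hmul (fun s t n => shift2 n i j s t) d P F.

Definition pmuls r (l : seq ('I_r * 'I_r)) d P (F : mseries r) : mseries r :=
  foldl (fun acc ij => pmul ij.1 ij.2 d P acc) F l.

Definition vanish_below r (l : 'I_r) (N : int) (F : mseries r) :=
  forall n, n l < N -> F n = 0.

Definition act r (k : 'I_r) (u : EW W) (F : mseries r) : mseries r :=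
  fun n => u (n k) (F n).

Definition lift_series r (k : 'I_r.+1) (F : mseries r) : mseries r.+1 :=
  fun n => F (fun j => n (lift k j)).

Definition lift_pair r (k : 'I_r.+1) (ij : 'I_r * 'I_r) := (lift k ij.1, lift k ij.2).

Definition homog d (P : {poly K}) : ps2 K :=
  fun s t => if (s + t == d)%N then P`_s else 0.

(* [iota_shift c0 c1 j] is the exponent shift of multiplication by
   [(x_c0 / x_c1)^j]. *)
Definition iota_shift r (c0 c1 : 'I_r) (j : int) (n : 'I_r -> int) : 'I_r -> int :=
  fun l => n l - (if l == c0 then j else 0) + (if l == c1 then j else 0).

Definition iota_expands r (c0 c1 : 'I_r) (e : int -> K) (X Z : mseries r) :=
  forall n, fsum_is (fun j : int => e j *: X (iota_shift c0 c1 j n)) (Z n).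

Implicit Types (r : nat) (P Q R : {poly K}).

Lemma shift2A r (i j : 'I_r) s t s' t' n :
  shift2 (shift2 n i j s' t') i j s t = shift2 n i j (s + s') (t + t').
Proof.
apply: functional_extensionality => l; rewrite /shift2.
by case: (l == i); case: (l == j); rewrite ?PoszD; lia.
Qed.

Lemma shift2C r (i j a b : 'I_r) s t s' t' n :
  shift2 (shift2 n a b s' t') i j s t = shift2 (shift2 n i j s t) a b s' t'.
Proof.
apply: functional_extensionality => l; rewrite /shift2.
by case: (l == i); case: (l == j); case: (l == a); case: (l == b); lia.
Qed.

Lemma pmulM r (i j : 'I_r) d1 d2 P Q F :
  (size P <= d1.+1)%N -> (size Q <= d2.+1)%N ->
  pmul i j (d1 + d2) (P * Q) F = pmul i j d2 Q (pmul i j d1 P F).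
Proof.
move=> HP HQ; apply: functional_extensionality => n.
by apply: hmulM => // *; apply: shift2A.
Qed.

Lemma pmulC r (i j a b : 'I_r) d d' P P' F :
  pmul i j d P (pmul a b d' P' F) = pmul a b d' P' (pmul i j d P F).
Proof.
apply: functional_extensionality => n; rewrite /pmul /hmul.
under eq_bigr => s _ do rewrite scaler_sumr.
rewrite exchange_big /=; apply: eq_bigr => s' _; rewrite scaler_sumr.
by apply: eq_bigr => s _; rewrite !scalerA mulrC shift2C.
Qed.

Lemma pmuls_cat r (l1 l2 : seq ('I_r * 'I_r)) d P F :
  pmuls (l1 ++ l2) d P F = pmuls l2 d P (pmuls l1 d P F).
Proof. exact: foldl_cat. Qed.

Lemma pmul_pmuls r (i j : 'I_r) l d P F :
  pmul i j d P (pmuls l d P F) = pmuls l d P (pmul i j d P F).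
Proof. by elim: l F => [|ab l IH] F //=; rewrite IH pmulC. Qed.

Lemma pmulsC r (l1 l2 : seq ('I_r * 'I_r)) d P F :
  pmuls l1 d P (pmuls l2 d P F) = pmuls l2 d P (pmuls l1 d P F).
Proof. by elim: l1 F => [|ij l1 IH] F //=; rewrite pmul_pmuls IH. Qed.

Lemma pmuls_sumr r l d P (J : Type) (s : seq J) (G : J -> mseries r) :
  pmuls l d P (fun n => \sum_(k <- s) G k n) = fun n => \sum_(k <- s) pmuls l d P (G k) n.
Proof.
elim: l G => [|ij l IH] G //=; rewrite -IH; congr pmuls.
by apply: functional_extensionality => n; apply: hmul_sumr.
Qed.

Lemma pmul_congr r (i j : 'I_r) d dR P R (c c' : mseries r) :
  (size P <= d.+1)%N -> (size R <= dR.+1)%N ->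
  pmul i j d P c = pmul i j d P c' ->
  pmul i j (d + dR) (P * R) c = pmul i j (d + dR) (P * R) c'.
Proof. by move=> HP HR E; rewrite !pmulM // E. Qed.

Lemma vanish_below_le r (l : 'I_r) N N' F :
  N' <= N -> vanish_below l N F -> vanish_below l N' F.
Proof. by move=> HN H n Hn; apply/H/(lt_le_trans Hn). Qed.

Lemma vanish_below_pmuls r (l0 : 'I_r) N l d P F :
  vanish_below l0 N F -> vanish_below l0 N (pmuls l d P F).
Proof.
elim: l F => [|[i j] l IH] F H //=; apply: IH => n Hn.
rewrite /pmul /hmul big1 // => s _; rewrite H ?scaler0 //.
apply: le_lt_trans Hn; rewrite /shift2.
by case: (l0 == i); case: (l0 == j); lia.
Qed.

Lemma vanish_below_sumr r (l : 'I_r) N (J : Type) (s : seq J) (F : J -> mseries r) :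
  (forall k, vanish_below l N (F k)) -> vanish_below l N (fun n => \sum_(k <- s) F k n).
Proof. by move=> H n Hn; rewrite big1 // => k _; rewrite H. Qed.

Lemma vanish_below_act r (l k : 'I_r) N u F :
  vanish_below l N F -> vanish_below l N (act k u F).
Proof. by move=> H n Hn; rewrite /act H ?linear0. Qed.

Lemma vanish_below_lift r (k : 'I_r.+1) (l : 'I_r) N F :
  vanish_below l N F -> vanish_below (lift k l) N (lift_series k F).
Proof. by move=> H n Hn; apply: H. Qed.

Definition avoids r (k : 'I_r) (ij : 'I_r * 'I_r) := (ij.1 != k) && (ij.2 != k).

Lemma pmuls_act r (k : 'I_r) l d P u F : all (avoids k) l ->
  pmuls l d P (act k u F) = act k u (pmuls l d P F).
Proof.
elim: l F => [|[i j] l IH] F //= /andP[/andP[/= Hi Hj] Hl]; rewrite -IH //.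
congr pmuls; apply: functional_extensionality => n.
rewrite /pmul /hmul /act linear_sum; apply: eq_bigr => s _.
rewrite linearZ /=; congr (_ *: u _ _).
by rewrite /shift2 eq_sym (negbTE Hi) eq_sym (negbTE Hj) !subr0.
Qed.

Lemma pmuls_lift r (k : 'I_r.+1) l d P F :
  pmuls (map (lift_pair k) l) d P (lift_series k F) = lift_series k (pmuls l d P F).
Proof.
elim: l F => [|[i j] l IH] F //=; rewrite -IH; congr pmuls.
apply: functional_extensionality => n; apply: eq_bigr => s _; congr (_ *: F _).
by apply: functional_extensionality => l'; rewrite /shift2 !(inj_eq lift_inj).
Qed.

Lemma avoids_lift r (k : 'I_r.+1) l : all (avoids k) (map (lift_pair k) l).
Proof.
by rewrite all_map; apply/allP => -[x y] _; rewrite /avoids /= !(eq_sym _ k) !neq_lift.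
Qed.

Lemma mul_pairs_pmuls r l d P (c : mseries r) :
  mul_pairs (homog d P) l c (pmuls l d P c).
Proof.
elim: l c => [|[i j] l IH] c //=; exists (pmul i j d P c); split => // n.
pose L := [seq (k, (d - k)%N) | k <- iota 0 d.+1].
exists L; split; first by rewrite map_inj_uniq ?iota_uniq // => x y [].
  case=> s t /= Hst; rewrite /homog; case: eqP => [E|]; last by rewrite scale0r.
  exfalso; move/negP: Hst; apply; apply/mapP; exists s; last by congr pair; lia.
  by rewrite mem_iota; lia.
rewrite big_map /pmul /hmul.
rewrite -(big_mkord xpredT (fun s => P`_s *: c (shift2 n i j s (d - s)))).
rewrite /index_iota subn0; apply: eq_big_seq => s; rewrite mem_iota => Hs /=.
by rewrite /homog ifT //; apply/eqP; lia.
Qed.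

Lemma iota_expands_pmuls r (c0 c1 : 'I_r) e l d P X Z :
  iota_expands c0 c1 e X Z -> iota_expands c0 c1 e (pmuls l d P X) (pmuls l d P Z).
Proof.
elim: l X Z => [|[i j] l IH] X Z H //=; apply: IH => n.
have HZ (s : 'I_d.+1) := fsum_isZ P`_s (H (shift2 n i j s (d - s))).
apply: eq_fsum_is (fsum_is_sumr (index_enum 'I_d.+1) HZ) => jj.
rewrite /pmul /hmul scaler_sumr; apply: eq_bigr => s _; rewrite !scalerA mulrC.
congr (_ *: X _); apply: functional_extensionality => l'; rewrite /iota_shift /shift2.
by case: (l' == c0); case: (l' == c1); case: (l' == i); case: (l' == j); lia.
Qed.

Lemma vanish_below_iota r (c0 c1 : 'I_r) e X Z N J :
  c0 != c1 -> (forall j, j < J -> e j = 0) -> vanish_below c0 N X ->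
  iota_expands c0 c1 e X Z -> vanish_below c0 (N + J) Z.
Proof.
move=> Hc He HX H n Hn; apply: (fsum_is0 (H n)) => j.
case: (ltP j J) => Hj; first by rewrite He ?scale0r.
by rewrite HX ?scaler0 // /iota_shift eqxx (negbTE Hc); lia.
Qed.

Lemma vanish_below_iota_lift r (k : 'I_r.+1) (c0 : 'I_r) e u l d P X Z N J :
  (forall j, j < J -> e j = 0) -> vanish_below c0 N (pmuls l d P X) ->
  iota_expands (lift k c0) k e (act k u (lift_series k X)) Z ->
  vanish_below (lift k c0) (N + J) (pmuls (map (lift_pair k) l) d P Z).
Proof.
move=> He HX /(iota_expands_pmuls (map (lift_pair k) l) d P).
rewrite pmuls_act ?avoids_lift // pmuls_lift.
apply: vanish_below_iota He _; first by rewrite eq_sym neq_lift.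
exact/vanish_below_act/vanish_below_lift.
Qed.

End MultiSeries.

Section LaurentExpansion.
Variable K : fieldType.
Implicit Types (E e : int -> K^o) (P Q f g h : {poly K}) (q : {fraction {poly K}}).

Definition conv d P E : int -> K^o := hmul (fun s _ (n : int) => n - s%:Z) d P E.

Definition poly_seq f (n : int) : K^o := if n is Posz m then f`_m else 0.

Lemma convE d P E n : conv d P E n = \sum_(s < d.+1) P`_s * E (n - s%:Z).
Proof. by []. Qed.

Lemma convM d1 d2 P Q E :
  (size P <= d1.+1)%N -> (size Q <= d2.+1)%N ->
  conv (d1 + d2) (P * Q) E = conv d2 Q (conv d1 P E).
Proof.
move=> HP HQ; apply: functional_extensionality => n; rewrite /conv hmulM //.
by move=> s t s' t' x; rewrite PoszD; lia.
Qed.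

Lemma conv_delta d f : (size f <= d.+1)%N -> conv d f (fun n => (n == 0)%:R) = poly_seq f.
Proof.
move=> Hf; apply: functional_extensionality => n; rewrite convE.
under eq_bigr => s _ do rewrite subr_eq0.
case: n => [m|m] /=; last by rewrite big1 // => -[s Hs] _; rewrite mulr0.
under eq_bigr => s _ do rewrite eqz_nat.
case: (ltnP m d.+1) => Hm.
  rewrite (bigD1 (Ordinal Hm)) //= eqxx mulr1 big1 ?addr0 // => s Hs.
  by rewrite (_ : (m == s) = false) ?mulr0 //; apply: contraNF Hs => /eqP E; apply/eqP/val_inj.
rewrite big1 ?(leq_sizeP _ _ Hf) // => s _.
by rewrite (_ : (m == s) = false) ?mulr0 //; apply: contra_leqF Hm => /eqP ->.
Qed.

Lemma conv_poly_seq dP df P f : (size P <= dP.+1)%N -> (size f <= df.+1)%N ->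
  conv dP P (poly_seq f) = poly_seq (f * P).
Proof.
move=> HP Hf; rewrite -(conv_delta Hf) -convM // conv_delta //.
exact: size_polyM_leq.
Qed.

(* The lowest nonzero terms of [h] and of [E] produce a nonzero term of [h E]. *)
Lemma conv_eq0 d h E J : h != 0 -> (size h <= d.+1)%N ->
  (forall j, j < J -> E j = 0) -> (forall n, conv d h E n = 0) -> forall j, E j = 0.
Proof.
move=> Hh Hs HJ H0 j; apply/eqP/negPn/negP => Hj.
have exK : exists k : nat, E (J + k%:Z) != 0.
  case: (ltP j J) => HjJ; first by move: Hj; rewrite HJ ?eqxx.
  by exists `|j - J|%N; rewrite abszE ger0_norm ?subr_ge0 // subrKC.
have exI : exists i : nat, h`_i != 0.
  by exists (size h).-1; rewrite -/(lead_coef h) lead_coef_eq0.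
case: (ex_minnP exK) => k0 Hk0 Hmink; case: (ex_minnP exI) => i0 Hi0 Hmini.
have Hi0d : (i0 < d.+1)%N.
  by apply: leq_trans Hs; rewrite ltnNge; apply: contra Hi0 => /leq_sizeP->.
have := H0 (J + k0%:Z + i0%:Z); rewrite convE (bigD1 (Ordinal Hi0d)) //= big1.
  by rewrite addr0 addrK => /eqP; rewrite mulf_eq0 (negbTE Hi0) (negbTE Hk0).
move=> [s Hsd] /=; rewrite -val_eqE /= => Hsi.
case: (ltngtP s i0) => Hsi0; last by move: Hsi; rewrite Hsi0 eqxx.
  suff /eqP-> : h`_s == 0 by rewrite mul0r.
  by apply: contraT => /Hmini; rewrite leqNgt Hsi0.
case: (leqP s (k0 + i0)) => Hk; last by rewrite HJ ?mulr0 //; lia.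
have -> : J + k0%:Z + i0%:Z - s%:Z = J + (k0 + i0 - s)%N%:Z.
  by rewrite -subzn // PoszD; lia.
suff /eqP-> : E (J + (k0 + i0 - s)%N%:Z) == 0 by rewrite mulr0.
by apply: contraT => /Hmink; lia.
Qed.

Lemma laurent_exp_conv q e : laurent_exp q e ->
  exists f g, [/\ g != 0, q = FracField.tofrac f / FracField.tofrac g
                & conv (size g).-1 g e = poly_seq f].
Proof.
move=> [_ [f [g [Hg Hq He]]]]; exists f, g; split => //.
apply: functional_extensionality => n.
by rewrite convE prednK ?size_poly_gt0 //; apply: He.
Qed.

Lemma laurent_exp_uniq q e e' : laurent_exp q e -> laurent_exp q e' -> e = e'.
Proof.
move=> He He'; have [[J HJ] _] := He; have [[J' HJ'] _] := He'.
have [f [g [Hg Hq Ce]]] := laurent_exp_conv He.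
have [f' [g' [Hg' Hq' Ce']]] := laurent_exp_conv He'.
have Hfg : f * g' = f' * g.
  apply/eqP; rewrite -tofrac_eq !tofracM.
  by rewrite -eqr_div ?tofrac_eq0 // -Hq -Hq'.
have Hsg : (size g <= (size g).-1.+1)%N by rewrite prednK ?size_poly_gt0.
have Hsg' : (size g' <= (size g').-1.+1)%N by rewrite prednK ?size_poly_gt0.
have Hsf : (size f <= (size f).-1.+1)%N by case: (size f).
have Hsf' : (size f' <= (size f').-1.+1)%N by case: (size f').
set D := ((size g).-1 + (size g').-1)%N.
have Ee : conv D (g * g') e = poly_seq (f * g').
  by rewrite convM // Ce (conv_poly_seq Hsg' Hsf).
have Ee' : conv D (g * g') e' = poly_seq (f * g').
  by rewrite /D addnC mulrC convM // Ce' (conv_poly_seq Hsg Hsf') Hfg.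
apply: functional_extensionality => j; apply/eqP; rewrite -subr_eq0; apply/eqP.
move: j; apply: (@conv_eq0 D (g * g') _ (Num.min J J')).
- by rewrite mulf_neq0.
- exact: size_polyM_leq.
- by move=> j; rewrite lt_min => /andP[/HJ-> /HJ'->]; rewrite subrr.
by move=> n; rewrite /conv hmulBr -!/(conv _ _ _ _) Ee Ee' subrr.
Qed.

End LaurentExpansion.

Definition pairs_from0 r : seq ('I_r.+1 * 'I_r.+1) :=
  [seq (ord0, lift ord0 j) | j <- enum 'I_r].

Lemma pairs_lt_S r :
  pairs_lt r.+1 = pairs_from0 r ++ map (lift_pair ord0) (pairs_lt r).
Proof.
rewrite /pairs_lt enum_ordSl allpairs_cons filter_cat; congr (_ ++ _).
  by rewrite map_cons /= -map_comp filter_map (eq_filter (a2 := predT)) ?filter_predT.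
move: {1 3}(enum 'I_r) => e; elim: (enum 'I_r) => [|i s IH] //.
rewrite map_cons !allpairs_cons !filter_cat map_cat IH; congr (_ ++ _).
rewrite map_cons /= -map_comp !filter_map -map_comp.
by congr map; apply: eq_filter => j /=; rewrite !lift0 ltnS.
Qed.

Lemma lift1_0 r : lift (lift ord0 (ord0 : 'I_r.+1)) (ord0 : 'I_r.+1) = ord0.
Proof. exact: val_inj. Qed.

Lemma lift1_lift0 r (j : 'I_r) :
  lift (lift ord0 (ord0 : 'I_r.+1)) (lift ord0 j) = lift ord0 (lift ord0 j).
Proof. exact: val_inj. Qed.

(* The pair factors reordered: first [(x_0, x_1)], then the pairs avoiding [x_1],
   then the pairs [(x_1, x_j)] with [j >= 2]. *)
Lemma pmuls_pairs_lt_SS (K : fieldType) (W : lmodType K) r d P (F : mseries W r.+2) :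
  pmuls (pairs_lt r.+2) d P F =
  pmuls (map (lift_pair ord0) (pairs_from0 r)) d P
    (pmuls (map (lift_pair (lift ord0 ord0)) (pairs_lt r.+1)) d P
       (pmul ord0 (lift ord0 ord0) d P F)).
Proof.
have -> : map (lift_pair (lift ord0 ord0)) (pairs_lt r.+1) =
    behead (pairs_from0 r.+1) ++ map (lift_pair ord0) (map (lift_pair ord0) (pairs_lt r)).
  rewrite pairs_lt_S map_cat; congr (_ ++ _); last first.
    by rewrite -!map_comp; apply: eq_map => -[x y]; rewrite /lift_pair /= !lift1_lift0.
  rewrite /pairs_from0 enum_ordSl /= -!map_comp; apply: eq_map => j.
  by rewrite /lift_pair /= lift1_0 lift1_lift0.
rewrite [pairs_lt r.+2]pairs_lt_S; set B := behead (pairs_from0 r.+1).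
have -> : pairs_from0 r.+1 = (ord0, lift ord0 ord0) :: B by rewrite /B /pairs_from0 enum_ordSl.
by rewrite pairs_lt_S map_cat /= !pmuls_cat pmulsC.
Qed.

Section ProductCoefficients.
Variables (K : fieldType) (W : lmodType K).

Definition drop2 r (a : 'I_r.+2 -> EW W) : 'I_r -> EW W :=
  fun j => a (lift ord0 (lift ord0 j)).

Definition fuse_head r (x : EW W) (a : 'I_r.+2 -> EW W) : 'I_r.+1 -> EW W :=
  fun j => if unlift ord0 j is Some j' then drop2 a j' else x.

Lemma prodcoefS r (a : 'I_r.+1 -> EW W) w :
  prodcoef a w = act ord0 (a ord0) (lift_series ord0 (prodcoef (fun j => a (lift ord0 j)) w)).
Proof.
by apply: functional_extensionality => n; rewrite /prodcoef enum_ordSl /= foldr_map.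
Qed.

Lemma prodcoefSS r (a : 'I_r.+2 -> EW W) w n :
  prodcoef a w n = a ord0 (n ord0) (a (lift ord0 ord0) (n (lift ord0 ord0))
    (prodcoef (drop2 a) w (fun j => n (lift ord0 (lift ord0 j))))).
Proof. by rewrite prodcoefS /act /lift_series prodcoefS. Qed.

Lemma prodcoef_fuse_head r (x : EW W) (a : 'I_r.+2 -> EW W) w n :
  prodcoef (fuse_head x a) w n =
  x (n ord0) (prodcoef (drop2 a) w (fun j => n (lift ord0 j))).
Proof.
rewrite prodcoefS /act /lift_series /fuse_head unlift_none; congr (x _ (prodcoef _ w _)).
by apply: functional_extensionality => j; rewrite liftK.
Qed.

End ProductCoefficients.

Section Clearing.
Variables (K : fieldType) (W : lmodType K).
Implicit Types (P Q R S : {poly K}).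

Definition pmul2 d P (F : int -> int -> W) (x y : int) : W :=
  \sum_(s < d.+1) P`_s *: F (x - s%:Z) (y - (d - s)%:Z).

Lemma pmul01E r d P (g : int -> int -> ('I_r -> int) -> W) n :
  pmul ord0 (lift ord0 ord0) d P
    (fun n => g (n ord0) (n (lift ord0 ord0)) (fun j => n (lift ord0 (lift ord0 j)))) n =
  pmul2 d P (fun x y => g x y (fun j => n (lift ord0 (lift ord0 j))))
    (n ord0) (n (lift ord0 ord0)).
Proof.
have H01 : (ord0 == lift ord0 ord0 :> 'I_r.+2) = false by apply/negbTE/neq_lift.
have Hj (j : 'I_r) : (lift ord0 (lift ord0 j) == ord0) = false.
  by apply/negbTE; rewrite eq_sym neq_lift.
have Hj1 (j : 'I_r) : (lift ord0 (lift ord0 j) == lift ord0 ord0) = false.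
  by apply/negbTE; rewrite (inj_eq lift_inj) eq_sym neq_lift.
apply: eq_bigr => s _; rewrite /shift2 eqxx H01 eq_sym H01 eqxx !subr0.
by congr (_ *: g _ _ _); apply: functional_extensionality => j; rewrite Hj Hj1 !subr0.
Qed.

(* Locality of [(a_0, a_1)] is applied to [a_0(x_0) a_1(x_1) w'] with
   [w' = a_2(x_2) a_3(x_3) ... w], a vector depending on the exponents of the
   remaining variables. *)
Lemma pmul_prodcoef_local r (a : 'I_r.+2 -> EW W) d P (G : W -> int -> int -> W) w :
  (forall w' x y, pmul2 d P (ab12 (a ord0) (a (lift ord0 ord0)) w') x y =
                  pmul2 d P (G w') x y) ->
  pmul ord0 (lift ord0 ord0) d P (prodcoef a w) =
  pmul ord0 (lift ord0 ord0) d P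
    (fun n => G (prodcoef (drop2 a) w (fun j => n (lift ord0 (lift ord0 j))))
                (n ord0) (n (lift ord0 ord0))).
Proof.
move=> HG; apply: functional_extensionality => n.
pose g x y t := ab12 (a ord0) (a (lift ord0 ord0)) (prodcoef (drop2 a) w t) x y.
have -> : prodcoef a w = fun n =>
    g (n ord0) (n (lift ord0 ord0)) (fun j => n (lift ord0 (lift ord0 j))).
  by apply: functional_extensionality => n'; rewrite prodcoefSS.
by rewrite (pmul01E d P g n) HG (pmul01E d P (fun x y t => G (prodcoef (drop2 a) w t) x y) n).
Qed.

Lemma iota_expands_fuse_head r (a : 'I_r.+2 -> EW W) (u v : EW W) e
    (H : W -> int -> int -> W) w :
  (forall w', iota_mul e (uv21 u v w') (H w')) ->
  iota_expands ord0 (lift ord0 ord0) e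
    (act (lift ord0 ord0) u (lift_series (lift ord0 ord0) (prodcoef (fuse_head v a) w)))
    (fun n => H (prodcoef (drop2 a) w (fun j => n (lift ord0 (lift ord0 j))))
                (n ord0) (n (lift ord0 ord0))).
Proof.
move=> HH n; apply: eq_fsum_is (HH _ (n ord0) (n (lift ord0 ord0))) => j.
rewrite /act /lift_series prodcoef_fuse_head /uv21 lift1_0 /iota_shift.
have H01 : (ord0 == lift ord0 ord0 :> 'I_r.+2) = false by apply/negbTE/neq_lift.
rewrite eqxx H01 eq_sym H01 eqxx; congr (_ *: u _ (v _ _)); try lia.
congr prodcoef; apply: functional_extensionality => k; rewrite lift1_lift0.
have -> : (lift ord0 (lift ord0 k) == ord0 :> 'I_r.+2) = false.
  by apply/negbTE; rewrite eq_sym neq_lift.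
have -> : (lift ord0 (lift ord0 k) == lift ord0 ord0 :> 'I_r.+2) = false.
  by apply/negbTE; rewrite (inj_eq lift_inj) eq_sym neq_lift.
by rewrite subr0 addr0.
Qed.

(* The expansions of [q i] cannot depend on [w]: Laurent expansions are unique. *)
Lemma loc_rhs_uniform m (u v : 'I_m -> EW W) q (G : W -> int -> int -> W) :
  (forall w, loc_rhs u v q w (G w)) ->
  exists (e : 'I_m -> int -> K) (J : int) (H : W -> 'I_m -> int -> int -> W),
    [/\ forall i j, j < J -> e i j = 0,
        forall w i, iota_mul (e i) (uv21 (u i) (v i) w) (H w i)
      & forall w x y, G w x y = \sum_(i < m) H w i x y].
Proof.
move=> /functional_choice[H HH].
have /functional_choice[e He] i : exists e, laurent_exp (q i) e.
  by have [e [He _]] := (HH 0).1 i; exists e.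
have [J HJ] : exists J, forall i j, j < J -> e i j = 0.
  apply: uniform_lbound => [i N N' HN HeN j Hj|i]; first exact/HeN/(lt_le_trans Hj).
  by have [[J HJ] _] := He i; exists J.
exists e, J, H; split => [//||w x y]; last exact: (HH w).2.
move=> w i.
by have [e' [He' Hi]] := (HH w).1 i; rewrite (laurent_exp_uniq (He i) He').
Qed.

Definition clears r (a : 'I_r -> EW W) d P :=
  forall w l, exists N, vanish_below l N (pmuls (pairs_lt r) d P (prodcoef a w)).

Lemma clears_tail r (a : 'I_r.+1 -> EW W) Ps ds R dR w (l : 'I_r) :
  (forall Q d1, (size Q <= d1.+1)%N ->
     clears (fun j => a (lift ord0 j)) (ds + d1) (Ps * Q)) ->
  (size R <= dR.+1)%N ->
  exists N, vanish_below (lift ord0 l) N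
    (pmuls (pairs_lt r.+1) (ds + dR) (Ps * R) (prodcoef a w)).
Proof.
move=> Hs HR; have [N HN] := Hs R dR HR w l; exists N.
rewrite pairs_lt_S pmuls_cat pmulsC prodcoefS pmuls_act ?avoids_lift // pmuls_lift.
exact/vanish_below_pmuls/vanish_below_act/vanish_below_lift.
Qed.

Lemma size_prod_leq m (C : pred 'I_m) (f : 'I_m -> {poly K} * nat) :
  (forall i, (size (f i).1 <= (f i).2.+1)%N) ->
  (size (\prod_(i < m | C i) (f i).1)%R <= (\sum_(i < m | C i) (f i).2).+1)%N.
Proof.
by move=> Hf; elim/big_ind2: _ => // *; [rewrite size_poly1 | apply: size_polyM_leq].
Qed.

(* After multiplying by the locality polynomial of [(a_0, a_1)], the product
   becomes a sum of expansions in [x_0 / x_1] of [u_i(x_1) v_i(x_0) a_2(x_2) ...],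
   and [v_i(x_0) a_2(x_2) ...] is cleared by induction. *)
Lemma vanish_below_head r (a : 'I_r.+2 -> EW W) m (u v : 'I_m -> EW W) e J
    dl Pl (H : W -> 'I_m -> int -> int -> W) (f : 'I_m -> {poly K} * nat) S dS w :
  (forall i j, j < J -> e i j = 0) ->
  (forall w i, iota_mul (e i) (uv21 (u i) (v i) w) (H w i)) ->
  (forall w x y, pmul2 dl Pl (ab12 (a ord0) (a (lift ord0 ord0)) w) x y =
                 pmul2 dl Pl (fun x y => \sum_(i < m) H w i x y) x y) ->
  (forall i, (size (f i).1 <= (f i).2.+1)%N) ->
  (forall i R dR, (size R <= dR.+1)%N ->
     clears (fuse_head (v i) a) ((f i).2 + dR) ((f i).1 * R)) ->
  (size Pl <= dl.+1)%N -> (size S <= dS.+1)%N ->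
  exists N, vanish_below ord0 N
    (pmuls (pairs_lt r.+2) (dl + ((\sum_(i < m) (f i).2) + dS))
       (Pl * ((\prod_(i < m) (f i).1) * S)) (prodcoef a w)).
Proof.
move=> HJ Hiota Hloc Hf Hclear HPl HS.
set o1 : 'I_r.+2 := lift ord0 ord0.
set Y := fun n : 'I_r.+2 -> int =>
  prodcoef (drop2 a) w (fun j => n (lift ord0 (lift ord0 j))).
set D := (dl + _)%N; set PP := Pl * _.
have HR : (size (\prod_(i < m) (f i).1 * S)%R <= (\sum_(i < m) (f i).2 + dS).+1)%N.
  exact/size_polyM_leq/HS/size_prod_leq.
rewrite pmuls_pairs_lt_SS (pmul_congr HPl HR (pmul_prodcoef_local w Hloc)) -pmul_pmuls.
suff [N HN] : exists N, vanish_below ord0 N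
    (pmuls (map (lift_pair o1) (pairs_lt r.+1)) D PP
       (fun n => \sum_(i < m) H (Y n) i (n ord0) (n o1))).
  by exists N; apply/vanish_below_pmuls/(vanish_below_pmuls [:: (ord0, o1)]).
rewrite pmuls_sumr.
suff [N HN] : exists N, forall i, vanish_below ord0 N
    (pmuls (map (lift_pair o1) (pairs_lt r.+1)) D PP (fun n => H (Y n) i (n ord0) (n o1))).
  by exists N; apply: vanish_below_sumr.
apply: uniform_lbound => [i N N'|i]; first exact: vanish_below_le.
pose Pi := \prod_(j < m | j != i) (f j).1; pose di := (\sum_(j < m | j != i) (f j).2)%N.
have Hdi : (size (Pl * (Pi * S))%R <= (dl + (di + dS)).+1)%N.
  exact/size_polyM_leq/size_polyM_leq/HS/size_prod_leq.
have [N HN] := Hclear i _ _ Hdi w ord0.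
have HI := iota_expands_fuse_head a w (Hiota^~ i); rewrite -{1}(lift1_0 r) in HI.
exists (N + J); rewrite -{1}(lift1_0 r); apply: (vanish_below_iota_lift (HJ i) _ HI).
have -> : D = ((f i).2 + (dl + (di + dS)))%N by rewrite /D (bigD1 i) //= -/di; lia.
by have -> : PP = (f i).1 * (Pl * (Pi * S)) by rewrite /PP (bigD1 i) //= -/Pi; ring.
Qed.

End Clearing.

Section ClearingExists.
Variables (K : fieldType) (W : lmodType K) (U : EW W -> Prop).
Variable M : {poly K} -> nat -> Prop.
Hypothesis M1 : M 1 0.
Hypothesis MM : forall (P Q : {poly K}) d e, M P d -> M Q e -> M (P * Q) (d + e).
Hypothesis M_size : forall (P : {poly K}) d, M P d -> (size P <= d.+1)%N.
Hypothesis U_local : forall a b, U a -> U b ->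
  exists m (u v : 'I_m -> EW W) (q : 'I_m -> {fraction {poly K}}) P d,
   [/\ M P d, forall i, U (u i) /\ U (v i) &
    forall w, exists G, loc_rhs u v q w G /\
      forall x y, pmul2 d P (ab12 a b w) x y = pmul2 d P G x y].

(* The extra factor [Q] is what lets the induction combine the polynomials
   obtained for different subsequences into one. *)
Definition clearing r (a : 'I_r -> EW W) P0 d0 :=
  M P0 d0 /\
  forall (Q : {poly K}) d1, (size Q <= d1.+1)%N -> clears a (d0 + d1) (P0 * Q).

Theorem clearing_exists r (a : 'I_r -> EW W) :
  (forall i, U (a i)) -> exists P0 d0, clearing a P0 d0.
Proof.
elim: r a => [|r IH] a Ua; first by exists 1, 0%N; split => // Q d1 _ w [].
case: r IH a Ua => [|r] IH a Ua.
  exists 1, 0%N; split => // Q d1 _ w l; have [N HN] := etrunc (a ord0) w.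
  exists N; rewrite (ord1 l); apply: vanish_below_pmuls => n Hn.
  by rewrite prodcoefS /act /lift_series /prodcoef enum_ord0 HN.
have [Ps [ds [Ms Hs]]] := IH _ (fun j => Ua (lift ord0 j)).
have [m [u [v [q [Pl [dl [Ml Huv /functional_choice[G HG]]]]]]]] :=
  U_local (Ua ord0) (Ua (lift ord0 ord0)).
have [e [J [H [HJ Hiota HGH]]]] := loc_rhs_uniform (fun w => (HG w).1).
have /functional_choice[f Hf] i :
    exists f : {poly K} * nat, clearing (fuse_head (v i) a) f.1 f.2.
  have [j|P0 [d0 HP0]] := IH (fuse_head (v i) a); last by exists (P0, d0).
  by rewrite /fuse_head; case: unliftP => [j'|] _; [apply: Ua | exact: (Huv i).2].
exists (Ps * (Pl * \prod_(i < m) (f i).1)), (ds + (dl + \sum_(i < m) (f i).2))%N.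
split; first by apply/MM/MM => //; elim/big_ind2: _ => // *; [apply: MM | apply: (Hf _).1].
move=> Q d1 HQ w l; case: (unliftP ord0 l) => [l'|] ->.
  rewrite -addnA -mulrA; apply: clears_tail => //.
  apply/size_polyM_leq/HQ/size_polyM_leq/size_prod_leq => [|i]; first exact: M_size.
  exact/M_size/(Hf i).1.
have Hloc w' x y : pmul2 dl Pl (ab12 (a ord0) (a (lift ord0 ord0)) w') x y =
    pmul2 dl Pl (fun x y => \sum_(i < m) H w' i x y) x y.
  by rewrite (HG w').2; apply: eq_bigr => s _; rewrite HGH.
have [N HN] := vanish_below_head w HJ Hiota Hloc (fun i => M_size (Hf i).1)
  (fun i => (Hf i).2) (M_size Ml) (size_polyM_leq (M_size Ms) HQ).
exists N; move: HN; congr (vanish_below _ _ (pmuls _ _ _ _)); first by lia.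
by ring.
Qed.

Lemma clearing_compatible r (a : 'I_r -> EW W) P0 d0 w : clearing a P0 d0 ->
  exists c, mul_pairs (homog d0 P0) (pairs_lt r) (prodcoef a w) c /\ multi_laurent c.
Proof.
move=> [_ /(_ 1 0%N)]; rewrite size_poly1 addn0 mulr1 => /(_ isT) Hc.
exists (pmuls (pairs_lt r) d0 P0 (prodcoef a w)); split; first exact: mul_pairs_pmuls.
have [N HN] : exists N, forall l, vanish_below l N (pmuls (pairs_lt r) d0 P0 (prodcoef a w)).
  by apply: uniform_lbound => [l N N'|l]; [exact: vanish_below_le | exact: Hc].
by exists N => n [l Hl]; exact: HN l n Hl.
Qed.

End ClearingExists.

Section StrigLocality.
Variables (K : fieldType) (W : lmodType K) (U : EW W -> Prop).

Lemma coef_Xsub1_exp k s : (s <= k)%N ->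
  (('X - 1) ^+ k : {poly K})`_s = (-1) ^+ (k - s) * ('C(k, s))%:R.
Proof.
move=> Hs; rewrite addrC exprDn coef_sum (bigD1 (Ordinal (leq_ltn_trans Hs (ltnSn k)))) //=.
have E m : ((-1) ^+ m : {poly K}) = ((-1) ^+ m)%:P by rewrite rmorphXn /= polyCN polyC1.
rewrite big1 => [|i Hi]; first by rewrite addr0 coefMn E coefCM coefXn eqxx mulr1 mulr_natr.
rewrite coefMn E coefCM coefXn (_ : (s == i) = false) ?mulr0 ?mul0rn //.
by apply/negbTE; apply: contra Hi => /eqP Esi; apply/eqP/val_inj.
Qed.

Lemma psXY_homog k : psXY K k = homog k (('X - 1) ^+ k).
Proof.
do 2![apply: functional_extensionality => ?]; rewrite /psXY /homog.
by case: eqP => // Est; rewrite coef_Xsub1_exp; [congr (_ ^+ _ * _); lia | lia].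
Qed.

Lemma mulX12_pmul2 k (F : int -> int -> W) : mulX12 k F =2 pmul2 k (('X - 1) ^+ k) F.
Proof. by move=> x y; apply: eq_bigr => s _; rewrite coef_Xsub1_exp // -ltnS. Qed.

Lemma mulP12_pmul2 (p : {poly K}) (F : int -> int -> W) x y : p != 0 ->
  mulP12 p F x (y - (size p).-1%:Z) = pmul2 (size p).-1 p F x y.
Proof.
rewrite /mulP12 /pmul2 -size_poly_gt0; case: (size p) => // d _ /=.
apply: eq_bigr => s _; congr (_ *: F _ _); have := ltn_ord s.
by move: (nat_of_ord s) => s' Hs'; rewrite -subzn; lia.
Qed.

Lemma Strig_local_compatible : Strig_local U -> compatible U.
Proof.
move=> HU r a Ua; pose M P d := P = ('X - 1 : {poly K}) ^+ d.
have [||||P0 [d0 Hc]] := @clearing_exists K W U M _ _ _ _ r a Ua.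
- by rewrite /M expr0.
- by move=> P Q d e -> ->; rewrite /M exprD.
- by move=> P d ->; rewrite -polyC1 size_exp_XsubC.
- move=> a' b' Ha Hb; have [m [u [v [q [k [Huv Hw]]]]]] := HU a' b' Ha Hb.
  exists m, u, v, q, (('X - 1) ^+ k), k; split => // w.
  by have [G [HG E]] := Hw w; exists G; split => // x y; rewrite -!mulX12_pmul2.
exists d0 => w; rewrite psXY_homog -(Hc.1 : P0 = _); exact: clearing_compatible Hc.
Qed.

Lemma quasi_Strig_local_quasi_compatible : quasi_Strig_local U -> quasi_compatible U.
Proof.
move=> HU r a Ua; pose M (P : {poly K}) d := P != 0 /\ (size P <= d.+1)%N.
have [||||P0 [d0 Hc]] := @clearing_exists K W U M _ _ _ _ r a Ua.
- by rewrite /M oner_neq0 size_poly1.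
- by move=> P Q d e [HP sP] [HQ sQ]; split; [exact: mulf_neq0 | exact: size_polyM_leq].
- by move=> P d [].
- move=> a' b' Ha Hb; have [m [u [v [q [p [Hp Huv Hw]]]]]] := HU a' b' Ha Hb.
  exists m, u, v, q, p, (size p).-1; split => //; first by rewrite /M Hp prednK ?size_poly_gt0.
  move=> w; have [G [HG E]] := Hw w; exists G; split => // x y.
  by rewrite -!mulP12_pmul2 // E.
exists (homog d0 P0); split; last by move=> w; exact: clearing_compatible Hc.
have [HP0 HsP0] := Hc.1.
exists (size P0).-1, (d0 - (size P0).-1)%N; rewrite /homog ifT; last by apply/eqP; lia.
by rewrite -/(lead_coef P0) lead_coef_eq0.
Qed.

End StrigLocality.

Theorem lemma5p2 (W : lmodType Cc) (U : EW W -> Prop) :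
  (Strig_local U -> compatible U) /\ (quasi_Strig_local U -> quasi_compatible U).
Proof.
by split; [exact: Strig_local_compatible | exact: quasi_Strig_local_quasi_compatible].
Qed.
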